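(* In the staggered-adoption setting described in the context, suppose: (i) $\{Y_{it}(a,e),E_i,A_{it}\}_{t=1}^T$ are i.i.d. across $i$ for $(a,e)\in\{0,1\}\times\{1,\dots,T,\infty\}$; (ii) $Y_{it}(0,e)=Y_{it}(0,e')$ for $t<\min\{e,e'\}$; (iii) for all $t_1\ne t_2$ and all $e$, $\mathbb{E}[g(Y_{it_1}(0,\infty))-g(Y_{it_2}(0,\infty))\mid E_i=e]=\mathbb{E}[g(Y_{it_1}(0,\infty))-g(Y_{it_2}(0,\infty))\mid E_i=\infty]$; (iv) $0\le h(e,s)\le\pi(e,s)$; (v) $|\tau_g(e,s)|\le|\mu_g(e,t)|$. Fix a finite treatment date $e$, a post-treatment period $t\ge e$ and a chosen period $s<e$. Then $\mu_g(e,t)$ is partially identified via \[\mu_g(e,t)\in m_g(e,s,t)\left[\min\left\{1,\frac{1}{1-\operatorname{sgn}(\tau_g(e,s)\mu_g(e,t))\pi(e,s)}\right\},\ \max\left\{1,\frac{1}{1-\operatorname{sgn}(\tau_g(e,s)\mu_g(e,t))\pi(e,s)}\right\}\right],\] i.e. $\mu_g(e,t)=m_g(e,s,t)\,c$ for some $c$ in the displayed interval, where $m_g(e,s,t)=\mathbb{E}[g(Y_{it})-g(Y_{is})\mid E_i=e]-\mathbb{E}[g(Y_{it})-g(Y_{is})\mid E_i=\infty]$.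
   Context: Periods $t\in\{1,\dots,T\}$, units $i=1,\dots,n$. $E_i\in\{1,\dots,T,\infty\}$ is the date at which unit $i$ is first treated (staggered adoption: once treated, always treated), with $E_i=\infty$ meaning never treated. $A_{it}\in\{0,1\}$ is the unobserved anticipation status of unit $i$ in period $t$. Potential outcomes $Y_{it}(a,e)$; anticipation only matters before treatment of eventually-treated units, i.e. $Y_{it}(1,e)=Y_{it}(0,e)$ whenever $t\ge e$ or $e=\infty$. Observed outcome $Y_{it}=Y_{it}(A_{it},E_i)$. $g$ is a known measurable real function with finite expectations. Define $\mu_g(e,t)=\mathbb{E}[g(Y_{it}(0,e))-g(Y_{it}(0,\infty))\mid E_i=e]$, $h(e,s)=\mathbb{P}[A_{is}=1\mid E_i=e]$, and the anticipatory effect $\tau_g(e,s)=\mathbb{E}[g(Y_{is}(1,e))-g(Y_{is}(0,e))\mid E_i=e,A_{is}=1]$. $\pi(e,s)\in(0,1)$ is a given bound. $\operatorname{sgn}$ is the sign function. *)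

From HB Require Import structures.
From mathcomp Require Import all_boot all_order all_algebra.
From mathcomp Require Import all_classical all_reals all_analysis.
Set Implicit Arguments. Unset Strict Implicit. Unset Printing Implicit Defensive.
Import Order.TTheory GRing.Theory Num.Theory.
Import numFieldNormedType.Exports.
Local Open Scope classical_set_scope.
Local Open Scope ring_scope.

(* Adoption dates: [Some k] = first treated at period k, [None] = never (= oo). *)
Definition date := option nat.

Definition before (t : nat) (e : date) : bool :=
  match e with Some k => (t < k)%N | None => true end.

Definition date_in_range (T : nat) (e : date) : bool :=
  match e with Some k => (1 <= k <= T)%N | None => true end.

Section CondExp.
Context (d : measure_display) (Omega : measurableType d) (R : realType)
        (P : probability Omega R).

Definition cexp (X : Omega -> R) (B : set Omega) : R :=
  Rintegral P B X / fine (P B).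

Definition cprob (A B : set Omega) : R :=
  fine (P (A `&` B)) / fine (P B).
End CondExp.

Section Model.
Context (d : measure_display) (Omega : measurableType d) (R : realType)
        (P : probability Omega R)
        (Y : nat -> bool -> date -> Omega -> R)  (* Y t a e = Y_{it}(a,e) *)
        (E : Omega -> date)
        (A : nat -> Omega -> bool)
        (g : R -> R).

Definition event_E (e : date) : set Omega := [set w | E w = e].

Definition Yobs (t : nat) (w : Omega) : R := Y t (A t w) (E w) w.

Definition mu_g (e t : nat) : R :=
  cexp P (fun w => g (Y t false (Some e) w) - g (Y t false None w))
       (event_E (Some e)).

Definition h_ant (e s : nat) : R :=
  cprob P [set w | A s w] (event_E (Some e)).

Definition tau_g (e s : nat) : R :=
  cexp P (fun w => g (Y s true (Some e) w) - g (Y s false (Some e) w))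
       (event_E (Some e) `&` [set w | A s w]).

Definition m_g (e s t : nat) : R :=
  cexp P (fun w => g (Yobs t w) - g (Yobs s w)) (event_E (Some e))
  - cexp P (fun w => g (Yobs t w) - g (Yobs s w)) (event_E None).
End Model.

(** Conditioning on adoption at [e] and differencing periods [t] and [s], the
    observed outcome splits into the effect [mu_g(e,t)], an untreated trend and
    the anticipation term [1{A_is} (g(Y_is(1,e)) - g(Y_is(0,e)))].  Parallel
    trends cancel the trend against the never-treated group, so that
    [m_g(e,s,t) = mu_g(e,t) - h(e,s) tau_g(e,s)].  Writing
    [tau_g = r mu_g] with [|r| <= 1], this is [mu_g (1 - h r)], and
    [0 <= h <= pi] confines [1 / (1 - h r)] between [1] and
    [1 / (1 - sgn(r) pi)]. *)
From mathcomp Require Import all_boot all_order all_algebra.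
From mathcomp Require Import all_classical all_reals all_analysis.
From mathcomp Require Import ring lra.
Set Implicit Arguments.
Unset Strict Implicit.
Unset Printing Implicit Defensive.

Import Order.TTheory GRing.Theory Num.Theory.
Import numFieldNormedType.Exports.
Local Open Scope classical_set_scope.
Local Open Scope ring_scope.

Lemma between_le_min_max (R : realDomainType) (a b c : R) :
  (a <= c <= b) \/ (b <= c <= a) -> Num.min a b <= c <= Num.max a b.
Proof.
by case=> /andP[ac cb]; rewrite ge_min le_max ac cb ?orbT.
Qed.

Section Attenuation.
Variables (R : realFieldType) (pi h r : R).
Hypotheses (hpi : 0 < pi < 1) (hh : 0 <= h <= pi) (hr : `|r| <= 1).

Lemma attenuation_gt0 : 0 < 1 - h * r.
Proof.
move: hpi hh hr => /andP[pi0 pi1] /andP[h0 h_le_pi].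
rewrite ler_norml => /andP[r_ge r_le]; nra.
Qed.

Lemma inv_attenuation_between :
  Num.min 1 (1 / (1 - Num.sg r * pi)) <= (1 - h * r)^-1
    <= Num.max 1 (1 / (1 - Num.sg r * pi)).
Proof.
apply: between_le_min_max.
move: hpi hh hr => /andP[pi0 pi1] /andP[h0 h_le_pi] /[!ler_norml] /andP[r_ge r_le].
have D0 := attenuation_gt0.
have [r_lt0 | r_gt0 | ->] := ltgtP r 0.
- right; rewrite ltr0_sg // mulN1r opprK mul1r.
  by rewrite invf_le1 // lef_pV2 ?posrE; [apply/andP; split|lra..]; nra.
- left; rewrite gtr0_sg // !mul1r.
  by rewrite invf_ge1 // lef_pV2 ?posrE; [apply/andP; split|lra..]; nra.
- by left; rewrite sgr0 !mulr0 !mul0r !subr0 !invr1 mul1r lexx.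
Qed.

End Attenuation.

(* [r := tau / mu] has [|r| <= 1]; when [mu = 0] the junk value [tau / 0 = 0]
   is still a valid ratio because then [tau = 0] as well. *)
Lemma attenuated_effect_bounds (R : realFieldType) (mu h tau pi : R) :
  0 < pi < 1 -> 0 <= h <= pi -> `|tau| <= `|mu| ->
  let k := 1 / (1 - Num.sg (tau * mu) * pi) in
  exists c, Num.min 1 k <= c <= Num.max 1 k /\ mu = (mu - h * tau) * c.
Proof.
move=> hpi hh htau k; set r := tau / mu.
have tauE : tau = r * mu.
  have [mu0 | mu_neq0] := eqVneq mu 0; last by rewrite /r divfK.
  by move: htau; rewrite mu0 normr0 normr_le0 mulr0 => /eqP.
have hr : `|r| <= 1.
  have [mu0 | mu_neq0] := eqVneq mu 0; first by rewrite /r mu0 invr0 mulr0 normr0.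
  by rewrite /r normrM normfV ler_pdivrMr ?normr_gt0 // mul1r.
have sgE : Num.sg (tau * mu) = Num.sg r.
  have [mu0 | mu_neq0] := eqVneq mu 0; first by rewrite /r mu0 invr0 !mulr0.
  have mu2_gt0 : 0 < mu * mu by rewrite -expr2 exprn_even_gt0.
  by rewrite tauE -mulrA sgrM [Num.sg (mu * mu)]gtr0_sg ?mulr1.
exists (1 - h * r)^-1; split; first by rewrite /k sgE; apply: inv_attenuation_between.
have D_neq0 : 1 - h * r != 0 by rewrite gt_eqF // (attenuation_gt0 hpi hh hr).
by rewrite tauE (_ : mu - h * (r * mu) = mu * (1 - h * r)) ?mulfK //; ring.
Qed.

Section ConditionalExpectation.
Context (d : measure_display) (Omega : measurableType d) (R : realType)
        (P : probability Omega R) (B : set Omega).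

Lemma eq_cexp (u v : Omega -> R) : {in B, u =1 v} -> cexp P u B = cexp P v B.
Proof. by move=> uv; rewrite /cexp (eq_Rintegral _ uv). Qed.

Hypothesis mB : measurable B.

Lemma integrable_EFinD (u v : Omega -> R) :
  P.-integrable B (EFin \o u) -> P.-integrable B (EFin \o v) ->
  P.-integrable B (EFin \o (fun w => u w + v w)).
Proof. by move=> iu iv; apply: eq_integrable (integrableD mB iu iv) => // w _. Qed.

Lemma integrable_EFinB (u v : Omega -> R) :
  P.-integrable B (EFin \o u) -> P.-integrable B (EFin \o v) ->
  P.-integrable B (EFin \o (fun w => u w - v w)).
Proof. by move=> iu iv; apply: eq_integrable (integrableB mB iu iv) => // w _. Qed.

Lemma cexpD (u v : Omega -> R) :
  P.-integrable B (EFin \o u) -> P.-integrable B (EFin \o v) ->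
  cexp P (fun w => u w + v w) B = cexp P u B + cexp P v B.
Proof. by move=> iu iv; rewrite /cexp RintegralD // mulrDl. Qed.

Lemma cexpB (u v : Omega -> R) :
  P.-integrable B (EFin \o u) -> P.-integrable B (EFin \o v) ->
  cexp P (fun w => u w - v w) B = cexp P u B - cexp P v B.
Proof. by move=> iu iv; rewrite /cexp RintegralB // mulrBl. Qed.

Lemma cexp_restrict (C : set Omega) (f : Omega -> R) :
  measurable C -> P.-integrable (B `&` C) (EFin \o f) ->
  cexp P (f \_ C) B = cprob P C B * cexp P f (B `&` C).
Proof.
move=> mC iBC; rewrite /cexp /cprob -Rintegral_mkcondr (setIC C B).
have [PBC0 | PBC_neq0] := eqVneq (fine (P (B `&` C))) 0;
  last by rewrite [RHS]mulrC mulrA mulfVK.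
have PBC_null : P (B `&` C) = 0%E.
  by rewrite -[P _]fineK ?PBC0 // fin_num_measure //; exact: measurableI.
rewrite PBC0 /Rintegral null_set_integral ?mul0r //; first exact: measurableI.
exact: measurable_int iBC.
Qed.

End ConditionalExpectation.

Section Decomposition.
Context (R : realType) (d : measure_display) (Omega : measurableType d)
        (P : probability Omega R) (T : nat)
        (Y : nat -> bool -> date -> Omega -> R) (E : Omega -> date)
        (A : nat -> Omega -> bool) (g : R -> R).

Hypothesis hYint :
  forall t a e, P.-integrable setT (fun w => (g (Y t a e w))%:E).
Hypothesis hEm : forall e, measurable (event_E E e).
Hypothesis hAm : forall t, measurable [set w | A t w].
Hypothesis hant : forall t e w, (1 <= t)%N -> (t <= T)%N ->
  (~~ before t e \/ e = None) -> Y t true e w = Y t false e w.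
Hypothesis hnoant : forall t e1 e2 w, (1 <= t)%N -> (t <= T)%N ->
  before t e1 -> before t e2 -> Y t false e1 w = Y t false e2 w.

Lemma integrable_gY_diff t1 a1 e1 t2 a2 e2 (D : set Omega) : measurable D ->
  P.-integrable D (EFin \o (fun w => g (Y t1 a1 e1 w) - g (Y t2 a2 e2 w))).
Proof.
by move=> mD; apply: integrable_EFinB => //; exact: integrableS (hYint _ _ _).
Qed.

Lemma Y_anticipation_free t a e w : (1 <= t <= T)%N ->
  ~~ before t e \/ e = None -> Y t a e w = Y t false e w.
Proof. by case/andP=> t_ge1 t_le; case: a => // /hant ->. Qed.

Lemma Yobs_never_treated t w : (1 <= t <= T)%N -> E w = None ->
  Yobs Y E A t w = Y t false None w.
Proof. by move=> tT Ew; rewrite /Yobs Ew Y_anticipation_free //; right. Qed.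

Lemma Yobs_post_treatment e t w : (1 <= t <= T)%N -> (e <= t)%N ->
  E w = Some e -> Yobs Y E A t w = Y t false (Some e) w.
Proof.
by move=> tT et Ew; rewrite /Yobs Ew Y_anticipation_free //; left; rewrite /= -leqNgt.
Qed.

Definition anticipation_gap (e s : nat) (w : Omega) : R :=
  g (Y s true (Some e) w) - g (Y s false (Some e) w).

Lemma gYobs_pre_treatment e s w : (1 <= s <= T)%N -> (s < e)%N ->
  E w = Some e ->
  g (Yobs Y E A s w)
  = g (Y s false None w) + (anticipation_gap e s \_ [set w | A s w]) w.
Proof.
case/andP=> s_ge1 s_le se Ew.
rewrite /Yobs Ew -(@hnoant s (Some e) None w) // patchE /anticipation_gap.
case: ifPn => [/set_mem /= -> | ]; first ring.
by rewrite notin_setE /= => /negP/negbTE ->; rewrite addr0.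
Qed.

Variables (e s t : nat).
Hypotheses (s_ge1 : (1 <= s)%N) (se : (s < e)%N) (et : (e <= t)%N) (tT : (t <= T)%N).

Let s_range : (1 <= s <= T)%N.
Proof. by rewrite s_ge1 (leq_trans (ltnW se) (leq_trans et tT)). Qed.

Let t_range : (1 <= t <= T)%N.
Proof. by rewrite tT (leq_trans s_ge1 (leq_trans (ltnW se) et)). Qed.

Lemma cexp_gYobs_treated :
  cexp P (fun w => g (Yobs Y E A t w) - g (Yobs Y E A s w)) (event_E E (Some e))
  = mu_g P Y E g e t
    + cexp P (fun w => g (Y t false None w) - g (Y s false None w)) (event_E E (Some e))
    - h_ant P E A e s * tau_g P Y E A g e s.
Proof.
have mEe := hEm (Some e); have mAs := hAm s.
have obs_split : {in event_E E (Some e),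
    (fun w => g (Yobs Y E A t w) - g (Yobs Y E A s w)) =1 (fun w =>
      (g (Y t false (Some e) w) - g (Y t false None w))
      + (g (Y t false None w) - g (Y s false None w))
      - (anticipation_gap e s \_ [set w | A s w]) w)}.
  move=> w /[!inE] Ew.
  by rewrite (Yobs_post_treatment t_range et Ew) (gYobs_pre_treatment s_range se Ew); ring.
rewrite (eq_cexp P obs_split).
have iMu := integrable_gY_diff t false (Some e) t false None mEe.
have iTrend := integrable_gY_diff t false None s false None mEe.
have iGap : P.-integrable (event_E E (Some e) `&` [set w | A s w])
                          (EFin \o anticipation_gap e s).
  exact: integrable_gY_diff (measurableI _ _ mEe mAs).
have iGap_restr : P.-integrable (event_E E (Some e))
                                (EFin \o anticipation_gap e s \_ [set w | A s w]).
  by rewrite -restrict_EFin; apply/integrable_restrict.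
rewrite (cexpB mEe (integrable_EFinD mEe iMu iTrend) iGap_restr).
by rewrite (cexpD mEe iMu iTrend) (cexp_restrict mEe mAs iGap).
Qed.

Lemma cexp_gYobs_never_treated :
  cexp P (fun w => g (Yobs Y E A t w) - g (Yobs Y E A s w)) (event_E E None)
  = cexp P (fun w => g (Y t false None w) - g (Y s false None w)) (event_E E None).
Proof.
by apply: eq_cexp => w /[!inE] Ew; rewrite !Yobs_never_treated.
Qed.

Lemma m_g_decomposition :
  cexp P (fun w => g (Y t false None w) - g (Y s false None w)) (event_E E (Some e))
  = cexp P (fun w => g (Y t false None w) - g (Y s false None w)) (event_E E None) ->
  m_g P Y E A g e s t = mu_g P Y E g e t - h_ant P E A e s * tau_g P Y E A g e s.
Proof.
move=> parallel_trends.
rewrite /m_g cexp_gYobs_treated cexp_gYobs_never_treated parallel_trends; ring.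
Qed.

End Decomposition.

Theorem theoremA1 (R : realType) (d : measure_display) (Omega : measurableType d)
  (P : probability Omega R) (T : nat)
  (Y : nat -> bool -> date -> Omega -> R) (E : Omega -> date)
  (A : nat -> Omega -> bool) (g : R -> R) (pi : nat -> nat -> R)
  (e t s : nat)
  (* measurability / finite expectations *)
  (hg : measurable_fun setT g)
  (hY : forall t' a e', measurable_fun setT (Y t' a e'))
  (hYint : forall t' a e', P.-integrable setT (fun w => (g (Y t' a e' w))%:E))
  (hEm : forall e', measurable (event_E E e'))
  (hAm : forall t', measurable [set w | A t' w])
  (* E_i takes values in {1,...,T,oo} *)
  (hErange : forall w, date_in_range T (E w))
  (* anticipation only matters before treatment of eventually-treated units *)
  (hant : forall t' e' w, (1 <= t')%N -> (t' <= T)%N -> (~~ before t' e' \/ e' = None) ->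
            Y t' true e' w = Y t' false e' w)
  (* conditioning events have positive probability *)
  (hPe : (0 < P (event_E E (Some e)))%E)
  (hPinf : (0 < P (event_E E None))%E)
  (* (ii) no differential pre-trends in untreated potential outcomes *)
  (hnoant : forall t' e1 e2 w, (1 <= t')%N -> (t' <= T)%N ->
            before t' e1 -> before t' e2 -> Y t' false e1 w = Y t' false e2 w)
  (* (iii) parallel trends *)
  (hpt : forall t1 t2 e', (1 <= t1 <= T)%N -> (1 <= t2 <= T)%N -> t1 <> t2 ->
         date_in_range T e' -> (0 < P (event_E E e'))%E ->
         cexp P (fun w => g (Y t1 false None w) - g (Y t2 false None w)) (event_E E e')
         = cexp P (fun w => g (Y t1 false None w) - g (Y t2 false None w)) (event_E E None))
  (* pi(e,s) in (0,1) *)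
  (hpi : 0 < pi e s < 1)
  (* (iv) *)
  (hh : 0 <= h_ant P E A e s <= pi e s)
  (* (v) *)
  (htau : `|tau_g P Y E A g e s| <= `|mu_g P Y E g e t|)
  (* fixed e finite, s < e <= t, all in {1,...,T} *)
  (he : (1 <= e <= T)%N) (ht : (e <= t <= T)%N) (hs : (1 <= s)%N) (hse : (s < e)%N) :
  let k := 1 / (1 - Num.sg (tau_g P Y E A g e s * mu_g P Y E g e t) * pi e s) in
  exists c : R, Num.min 1 k <= c <= Num.max 1 k /\
    mu_g P Y E g e t = m_g P Y E A g e s t * c.
Proof.
move=> k; case/andP: ht => et tT.
have t_range : (1 <= t <= T)%N by rewrite tT (leq_trans hs (leq_trans (ltnW hse) et)).
have s_range : (1 <= s <= T)%N by rewrite hs (leq_trans (ltnW hse) (leq_trans et tT)).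
have ts : t <> s by move=> tsE; move: (leq_trans hse et); rewrite tsE ltnn.
have parallel_trends := hpt t s (Some e) t_range s_range ts he hPe.
rewrite /k (m_g_decomposition hYint hEm hAm hant hnoant hs hse et tT parallel_trends).
exact: attenuated_effect_bounds.
Qed.
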